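(* For every real $\nu>1$, the quantity $c_0(\nu):=2\left(\frac{\Gamma(\nu)}{\sqrt{\pi}}\right)^{\frac{2}{2\nu-1}}$ satisfies $$\frac{2\nu}{e}\left(\frac{2}{e}\right)^{\frac{1}{2\nu-1}}\;<\;c_0(\nu)\;<\;\frac{2\nu}{e}.$$
   Context: $\Gamma$ denotes the Euler Gamma function. *)

From Stdlib Require Import Reals.
From Coquelicot Require Import Coquelicot.
Open Scope R_scope.

Definition Gamma (x : R) : R :=
  RInt_gen (fun t => Rpower t (x - 1) * exp (- t))
           (at_right 0) (Rbar_locally p_infty).

Definition c0 (nu : R) : R :=
  2 * Rpower (Gamma nu / sqrt PI) (2 / (2 * nu - 1)).

From Stdlib Require Import Reals Lra Lia ZArith Classical_Prop.
From Coquelicot Require Import Coquelicot.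
Open Scope R_scope.

(* Write [L y = ln (Gamma y) - (y - 1/2) ln y + y] for the remainder in
   Stirling's formula.  Exactly,
     [c0 nu = (2 nu / e) exp (2 / (2 nu - 1) (L nu - ln PI / 2 - 1/2))],
   so the two claimed bounds are equivalent to
     [ln (2 PI) / 2 < L nu < ln PI / 2 + 1/2].
   These hold because [L] decreases strictly to its limit [ln (2 PI) / 2]:
   by an atanh estimate, [L y - L (y + 1)] lies in
   [(0, 1/(12 y) - 1/(12 (y + 1)))], so [L nu] exceeds the limit and exceeds
   it by less than [1/12 < (1 - ln 2) / 2]. *)

Lemma exp_le_exp_compat x y : x <= y -> exp x <= exp y.
Proof. intros [H | ->]; [left; apply exp_increasing |]; lra. Qed.

Lemma ln_le_sub1 v : 0 < v -> ln v <= v - 1.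
Proof. intros Hv. pose proof (exp_ineq1_le (ln v)). rewrite exp_ln in H; lra. Qed.

Lemma le_epsilon_relax u v : (forall eps, 0 < eps -> u <= v + eps) -> u <= v.
Proof.
  intros H. destruct (Rle_or_lt u v) as [|Hlt]; auto.
  specialize (H ((u - v) / 2)). lra.
Qed.

Lemma RInt_by_antiderivative (F f : R -> R) a b : a <= b ->
  (forall t, a <= t <= b -> is_derive F t (f t)) ->
  (forall t, a <= t <= b -> continuous f t) -> RInt f a b = F b - F a.
Proof.
  intros Hab Hd Hc.
  apply (is_RInt_unique (V := R_CompleteNormedModule)).
  apply (is_RInt_derive (V := R_CompleteNormedModule));
    intros t Ht; rewrite Rmin_left, Rmax_right in Ht by lra; auto.
Qed.

Lemma RInt_lin (f g : R -> R) u v a b : ex_RInt f a b -> ex_RInt g a b ->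
  RInt (fun t => u * f t + v * g t) a b = u * RInt f a b + v * RInt g a b.
Proof.
  intros Hf Hg.
  apply (is_RInt_unique (V := R_CompleteNormedModule)).
  apply (is_RInt_plus (V := R_NormedModule) (fun t => u * f t) (fun t => v * g t));
    apply (is_RInt_scal (V := R_NormedModule));
    now apply (RInt_correct (V := R_CompleteNormedModule)).
Qed.

(* The set of integrals of [f] over compact subintervals of (0, +oo); the
   improper integral of a nonnegative [f] is its least upper bound. *)
Definition partial_integrals (f : R -> R) (y : R) : Prop :=
  exists a b, 0 < a <= b /\ y = RInt f a b.

Section PositiveHalfLine.

Variable f : R -> R.
Hypothesis f_cont : forall t, 0 < t -> continuous f t.

Lemma ex_RInt_pos a b : 0 < a -> 0 < b -> ex_RInt f a b.
Proof.
  intros Ha Hb. apply (ex_RInt_continuous (V := R_CompleteNormedModule)).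
  intros z [Hz _]. apply f_cont. apply Rlt_le_trans with (2 := Hz).
  unfold Rmin; destruct Rle_dec; lra.
Qed.

Hypothesis f_nonneg : forall t, 0 < t -> 0 <= f t.

Lemma RInt_enlarge a b a' b' :
  0 < a' <= a -> a <= b <= b' -> RInt f a b <= RInt f a' b'.
Proof.
  intros Ha Hb.
  rewrite <- (RInt_Chasles f a' a b') by (apply ex_RInt_pos; lra).
  rewrite <- (RInt_Chasles f a b b') by (apply ex_RInt_pos; lra).
  assert (0 <= RInt f a' a).
  { apply RInt_ge_0; [lra | apply ex_RInt_pos; lra | intros; apply f_nonneg; lra]. }
  assert (0 <= RInt f b b').
  { apply RInt_ge_0; [lra | apply ex_RInt_pos; lra | intros; apply f_nonneg; lra]. }
  unfold plus; simpl; lra.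
Qed.

Lemma partial_integrals_lub M :
  (forall a b, 0 < a <= b -> RInt f a b <= M) ->
  exists l, is_lub (partial_integrals f) l.
Proof.
  intros HM. destruct (completeness (partial_integrals f)) as [l Hl].
  - exists M. intros y [a [b [Hab ->]]]. now apply HM.
  - exists (RInt f 1 1), 1, 1. split; [lra | reflexivity].
  - now exists l.
Qed.

Lemma is_RInt_gen_lub l : is_lub (partial_integrals f) l ->
  is_RInt_gen f (at_right 0) (Rbar_locally p_infty) l.
Proof.
  intros [Hub Hlub] P [eps Heps].
  assert (Happrox : exists a0 b0, 0 < a0 <= b0 /\ l - eps < RInt f a0 b0).
  { apply NNPP. intros Hn.
    assert (l <= l - eps) by
      (apply Hlub; intros y [a [b [Hab ->]]]; apply Rnot_lt_le; intros Hlt;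
       apply Hn; exists a, b; auto).
    pose proof (cond_pos eps); lra. }
  destruct Happrox as [a0 [b0 [Hab0 Hl0]]].
  apply Filter_prod with (Q := fun a => 0 < a < a0) (R := fun b => b0 < b).
  - exists (mkposreal a0 (proj1 Hab0)). intros y Hy Hy0. split; auto.
    unfold ball in Hy; simpl in Hy; unfold AbsRing_ball, abs, minus, plus, opp in Hy;
      simpl in Hy.
    rewrite Ropp_0, Rplus_0_r, Rabs_right in Hy; lra.
  - now exists b0.
  - intros a b Ha Hb. exists (RInt f a b). split.
    + apply (RInt_correct (V := R_CompleteNormedModule)). apply ex_RInt_pos; lra.
    + apply Heps. unfold ball; simpl; unfold AbsRing_ball, abs, minus, plus, opp; simpl.
      assert (RInt f a0 b0 <= RInt f a b) by (apply RInt_enlarge; lra).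
      assert (RInt f a b <= l) by (apply Hub; exists a, b; split; [lra | reflexivity]).
      rewrite Rabs_left1; lra.
Qed.

End PositiveHalfLine.

Definition gamma_kernel (x t : R) : R := Rpower t (x - 1) * exp (- t).

Lemma gamma_kernel_cont x t : 0 < t -> continuous (gamma_kernel x) t.
Proof.
  intros Ht. apply (@ex_derive_continuous R_AbsRing R_NormedModule).
  unfold gamma_kernel, Rpower. auto_derive. exact Ht.
Qed.

Lemma gamma_kernel_pos x t : 0 < t -> 0 < gamma_kernel x t.
Proof. intros Ht. apply Rmult_lt_0_compat; apply exp_pos. Qed.

Lemma gamma_kernel_nonneg x t : 0 < t -> 0 <= gamma_kernel x t.
Proof. intros Ht. left. now apply gamma_kernel_pos. Qed.

Lemma pow_exp_bound y : exists K, 0 < K /\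
  forall t, 1 <= t -> Rpower t y * exp (- t) <= K * exp (- t / 2).
Proof.
  set (c := Rabs y + 1).
  assert (Hc : 0 < c) by (unfold c; pose proof (Rabs_pos y); lra).
  exists (exp (c * ln (2 * c))). split; [apply exp_pos |].
  intros t Ht. unfold Rpower. rewrite <- !exp_plus. apply exp_le_exp_compat.
  assert (H0 : 0 <= ln t) by (rewrite <- ln_1; apply ln_le; lra).
  assert (H1 : ln (t / (2 * c)) <= t / (2 * c) - 1) by
    (apply ln_le_sub1; apply Rdiv_lt_0_compat; lra).
  rewrite ln_div in H1 by lra.
  assert (H2 : y * ln t <= c * ln t).
  { apply Rmult_le_compat_r; auto. unfold c. pose proof (Rle_abs y). lra. }
  assert (H3 : c * (ln t - ln (2 * c)) <= c * (t / (2 * c) - 1))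
    by (apply Rmult_le_compat_l; lra).
  assert (H4 : c * (t / (2 * c)) = t / 2) by (field; lra).
  nra.
Qed.

Lemma pow_exp_vanishes_at_infinity x eps : 0 < eps ->
  exists B, forall b, B <= b -> Rpower b x * exp (- b) <= eps.
Proof.
  intros He. destruct (pow_exp_bound x) as [K [HK HKb]].
  exists (Rmax 1 (2 * K / eps)). intros b Hb.
  pose proof (Rmax_l 1 (2 * K / eps)) as Hb1. pose proof (Rmax_r 1 (2 * K / eps)) as Hb2.
  apply Rle_trans with (K * exp (- b / 2)); [apply HKb; lra |].
  assert (E1 : 1 + b / 2 <= exp (b / 2)) by apply exp_ineq1_le.
  assert (E2 : exp (- b / 2) * exp (b / 2) = 1).
  { rewrite <- exp_plus. replace (- b / 2 + b / 2) with 0 by field. apply exp_0. }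
  assert (E3 : 0 < exp (- b / 2)) by apply exp_pos.
  assert (E4 : 2 * K <= eps * b).
  { apply Rmult_le_reg_r with (/ eps); [apply Rinv_0_lt_compat; lra |].
    replace (eps * b * / eps) with b by (field; lra). unfold Rdiv in Hb2. lra. }
  nra.
Qed.

Lemma pow_exp_vanishes_at_zero x eps : 0 < x -> 0 < eps ->
  exists A, 0 < A /\ forall a, 0 < a <= A -> Rpower a x * exp (- a) <= eps.
Proof.
  intros Hx He. exists (Rpower eps (1 / x)). split; [apply exp_pos |].
  intros a Ha.
  assert (Hax : Rpower a x <= eps).
  { replace eps with (Rpower (Rpower eps (1 / x)) x).
    - apply Rle_Rpower_l; lra.
    - rewrite Rpower_mult. replace (1 / x * x) with 1 by (field; lra).
      now apply Rpower_1. }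
  assert (exp (- a) <= 1) by (rewrite <- exp_0; apply exp_le_exp_compat; lra).
  assert (0 < Rpower a x) by apply exp_pos.
  nra.
Qed.

(* Near 0 the kernel is at most [t^(x-1)], whose integral over (0, 1] is [1/x]. *)
Lemma gamma_partial_near_zero x a : 0 < x -> 0 < a <= 1 ->
  RInt (gamma_kernel x) a 1 <= 1 / x.
Proof.
  intros Hx Ha.
  apply Rle_trans with (RInt (fun t => Rpower t (x - 1)) a 1).
  - apply RInt_le; try lra.
    + apply ex_RInt_pos; try lra. apply gamma_kernel_cont.
    + apply ex_RInt_pos; try lra. intros t Ht.
      apply (@ex_derive_continuous R_AbsRing R_NormedModule).
      unfold Rpower. auto_derive. exact Ht.
    + intros t Ht. unfold gamma_kernel.
      rewrite <- (Rmult_1_r (Rpower t (x - 1))) at 2.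
      apply Rmult_le_compat_l; [left; apply exp_pos |].
      rewrite <- exp_0. apply exp_le_exp_compat; lra.
  - rewrite (RInt_by_antiderivative (fun t => Rpower t x / x)); try lra.
    + assert (0 < Rpower a x / x) by (apply Rdiv_lt_0_compat; auto; apply exp_pos).
      unfold Rpower at 1. rewrite ln_1, Rmult_0_r, exp_0. lra.
    + intros t Ht. unfold Rpower. auto_derive; [lra |].
      replace (x * ln t) with ((x - 1) * ln t + ln t) by ring.
      rewrite exp_plus, exp_ln by lra. field. split; lra.
    + intros t Ht. apply (@ex_derive_continuous R_AbsRing R_NormedModule).
      unfold Rpower. auto_derive. lra.
Qed.

(* On [1, +oo) the kernel is at most [K e^(-t/2)], whose integral is [2K]. *)
Lemma gamma_partial_near_infinity x :
  exists M, forall b, 1 <= b -> RInt (gamma_kernel x) 1 b <= M.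
Proof.
  destruct (pow_exp_bound (x - 1)) as [K [HK HKb]].
  exists (2 * K). intros b Hb.
  apply Rle_trans with (RInt (fun t => K * exp (- t / 2)) 1 b).
  - apply RInt_le; try lra.
    + apply ex_RInt_pos; try lra. apply gamma_kernel_cont.
    + apply ex_RInt_pos; try lra. intros t Ht.
      apply (@ex_derive_continuous R_AbsRing R_NormedModule). auto_derive. auto.
    + intros t Ht. apply HKb. lra.
  - rewrite (RInt_by_antiderivative (fun t => - 2 * K * exp (- t / 2))); try lra.
    + assert (0 < exp (- b / 2)) by apply exp_pos.
      assert (exp (- 1 / 2) <= 1) by (rewrite <- exp_0; apply exp_le_exp_compat; lra).
      assert (K * exp (- 1 / 2) <= K * 1) by (apply Rmult_le_compat_l; lra).
      assert (0 <= K * exp (- b / 2)) by (apply Rmult_le_pos; lra).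
      replace (- (1) / 2) with (-1 / 2) by lra. lra.
    + intros t Ht. auto_derive; auto. unfold Rdiv; field.
    + intros t Ht. apply (@ex_derive_continuous R_AbsRing R_NormedModule).
      auto_derive. auto.
Qed.

Lemma gamma_partial_bounded x : 0 < x ->
  exists M, forall a b, 0 < a <= b -> RInt (gamma_kernel x) a b <= M.
Proof.
  intros Hx. destruct (gamma_partial_near_infinity x) as [M HM].
  exists (1 / x + M). intros a b Hab.
  set (a' := Rmin a 1). set (b' := Rmax b 1).
  assert (Ha' : 0 < a' <= 1) by (unfold a', Rmin; destruct Rle_dec; lra).
  assert (Ha'a : a' <= a) by apply Rmin_l.
  assert (Hb' : 1 <= b') by apply Rmax_r.
  assert (Hbb' : b <= b') by apply Rmax_l.
  apply Rle_trans with (RInt (gamma_kernel x) a' b').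
  { apply RInt_enlarge; auto using gamma_kernel_cont, gamma_kernel_nonneg; lra. }
  rewrite <- (RInt_Chasles (gamma_kernel x) a' 1 b')
    by (apply ex_RInt_pos; auto using gamma_kernel_cont; lra).
  pose proof (gamma_partial_near_zero x a' Hx Ha'). pose proof (HM b' Hb').
  unfold plus; simpl. lra.
Qed.

Lemma Gamma_lub x : 0 < x -> is_lub (partial_integrals (gamma_kernel x)) (Gamma x).
Proof.
  intros Hx. destruct (gamma_partial_bounded x Hx) as [M HM].
  destruct (partial_integrals_lub (gamma_kernel x) M HM) as [l Hl].
  replace (Gamma x) with l; [exact Hl |].
  symmetry. apply is_RInt_gen_unique. apply is_RInt_gen_lub; [| | exact Hl].
  - apply gamma_kernel_cont.
  - apply gamma_kernel_nonneg.
Qed.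

Lemma Gamma_ge_partial x a b : 0 < x -> 0 < a <= b ->
  RInt (gamma_kernel x) a b <= Gamma x.
Proof. intros Hx Hab. apply (Gamma_lub x Hx). now exists a, b. Qed.

Lemma Gamma_le_bound x M : 0 < x ->
  (forall a b, 0 < a <= b -> RInt (gamma_kernel x) a b <= M) -> Gamma x <= M.
Proof.
  intros Hx HM. apply (Gamma_lub x Hx). intros y [a [b [Hab ->]]]. now apply HM.
Qed.

Lemma Gamma_pos x : 0 < x -> 0 < Gamma x.
Proof.
  intros Hx. apply Rlt_le_trans with (RInt (gamma_kernel x) 1 2).
  - apply RInt_gt_0; [lra | |]; intros t Ht.
    + apply gamma_kernel_pos; lra.
    + apply gamma_kernel_cont; lra.
  - apply Gamma_ge_partial; lra.
Qed.

(* Integration by parts: [d/dt (-t^x e^(-t)) = t^x e^(-t) - x t^(x-1) e^(-t)]. *)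
Lemma gamma_partial_by_parts x a b : 0 < x -> 0 < a <= b ->
  RInt (gamma_kernel (x + 1)) a b
  = x * RInt (gamma_kernel x) a b + Rpower a x * exp (- a) - Rpower b x * exp (- b).
Proof.
  intros Hx Hab.
  assert (E : RInt (fun t => 1 * gamma_kernel (x + 1) t + (- x) * gamma_kernel x t) a b
              = (- Rpower b x * exp (- b)) - (- Rpower a x * exp (- a))).
  { apply (RInt_by_antiderivative (fun t => - Rpower t x * exp (- t))); try lra.
    - intros t Ht. unfold gamma_kernel, Rpower. auto_derive; [lra |].
      replace (x * ln t) with ((x - 1) * ln t + ln t) by ring.
      replace ((x + 1 - 1) * ln t) with ((x - 1) * ln t + ln t) by ring.
      rewrite exp_plus, exp_ln by lra. field. lra.
    - intros t Ht. apply (@ex_derive_continuous R_AbsRing R_NormedModule).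
      unfold gamma_kernel, Rpower. auto_derive; lra. }
  rewrite RInt_lin in E by (apply ex_RInt_pos; try lra; apply gamma_kernel_cont).
  lra.
Qed.

(* The boundary term at 0 vanishes, so [Gamma (x + 1) <= x Gamma x] ... *)
Lemma Gamma_succ_le x : 0 < x -> Gamma (x + 1) <= x * Gamma x.
Proof.
  intros Hx. apply Gamma_le_bound; [lra |]. intros a b Hab.
  apply le_epsilon_relax. intros eps He.
  destruct (pow_exp_vanishes_at_zero x eps Hx He) as [A [HA HAb]].
  set (a' := Rmin a A).
  assert (Ha' : 0 < a' <= a) by (unfold a', Rmin; destruct Rle_dec; lra).
  assert (Ha'A : a' <= A) by apply Rmin_r.
  apply Rle_trans with (RInt (gamma_kernel (x + 1)) a' b).
  { apply RInt_enlarge; auto using gamma_kernel_cont, gamma_kernel_nonneg; lra. }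
  rewrite gamma_partial_by_parts by lra.
  assert (RInt (gamma_kernel x) a' b <= Gamma x) by (apply Gamma_ge_partial; lra).
  assert (x * RInt (gamma_kernel x) a' b <= x * Gamma x) by (apply Rmult_le_compat_l; lra).
  assert (Rpower a' x * exp (- a') <= eps) by (apply HAb; lra).
  assert (0 <= Rpower b x * exp (- b)) by (apply Rmult_le_pos; left; apply exp_pos).
  lra.
Qed.

(* ... and the boundary term at +oo vanishes, so [x Gamma x <= Gamma (x + 1)]. *)
Lemma Gamma_succ_ge x : 0 < x -> x * Gamma x <= Gamma (x + 1).
Proof.
  intros Hx.
  enough (Gamma x <= Gamma (x + 1) / x) by
    (apply Rmult_le_reg_r with (/ x); [apply Rinv_0_lt_compat; lra |];
     replace (x * Gamma x * / x) with (Gamma x) by (field; lra); exact H).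
  apply le_epsilon_relax. intros eps He.
  apply Gamma_le_bound; [lra |]. intros a b Hab.
  destruct (pow_exp_vanishes_at_infinity x (x * eps)) as [B HBb].
  { apply Rmult_lt_0_compat; lra. }
  set (b' := Rmax b B).
  assert (Hbb' : b <= b') by apply Rmax_l.
  assert (HBb' : B <= b') by apply Rmax_r.
  apply Rle_trans with (RInt (gamma_kernel x) a b').
  { apply RInt_enlarge; auto using gamma_kernel_cont, gamma_kernel_nonneg; lra. }
  pose proof (gamma_partial_by_parts x a b' Hx ltac:(lra)) as Hparts.
  assert (RInt (gamma_kernel (x + 1)) a b' <= Gamma (x + 1)) by
    (apply Gamma_ge_partial; lra).
  assert (0 <= Rpower a x * exp (- a)) by (apply Rmult_le_pos; left; apply exp_pos).
  assert (Rpower b' x * exp (- b') <= x * eps) by (apply HBb; lra).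
  apply Rmult_le_reg_l with x; [lra |].
  replace (x * (Gamma (x + 1) / x + eps)) with (Gamma (x + 1) + x * eps) by (field; lra).
  lra.
Qed.

Lemma Gamma_succ x : 0 < x -> Gamma (x + 1) = x * Gamma x.
Proof.
  intros Hx. apply Rle_antisym; [apply Gamma_succ_le | apply Gamma_succ_ge]; exact Hx.
Qed.

(* [Gamma 1 = 1]: the partial integrals are [e^(-a) - e^(-b)]. *)
Lemma Gamma_one : Gamma 1 = 1.
Proof.
  assert (Epart : forall a b, 0 < a <= b ->
                  RInt (gamma_kernel 1) a b = exp (- a) - exp (- b)).
  { intros a b Hab.
    rewrite (RInt_by_antiderivative (fun t => - exp (- t))); try lra.
    - intros t Ht. unfold gamma_kernel, Rpower. auto_derive; auto.
      replace (1 - 1) with 0 by ring. rewrite Rmult_0_l, exp_0. ring.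
    - intros t Ht. apply gamma_kernel_cont. lra. }
  apply Rle_antisym.
  - apply Gamma_le_bound; [lra |]. intros a b Hab. rewrite Epart by exact Hab.
    assert (exp (- a) <= 1) by (rewrite <- exp_0; apply exp_le_exp_compat; lra).
    assert (0 < exp (- b)) by apply exp_pos. lra.
  - apply le_epsilon_relax. intros eps He.
    destruct (pow_exp_vanishes_at_infinity 0 (eps / 2)) as [B HBb]; [lra |].
    set (b := Rmax (eps / 2) B).
    assert (Hb : eps / 2 <= b /\ B <= b) by (split; [apply Rmax_l | apply Rmax_r]).
    pose proof (Gamma_ge_partial 1 (eps / 2) b ltac:(lra) ltac:(lra)) as Hpart.
    rewrite Epart in Hpart by lra.
    assert (exp (- b) <= eps / 2).
    { specialize (HBb b (proj2 Hb)). rewrite Rpower_O in HBb by lra. lra. }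
    assert (1 + - (eps / 2) <= exp (- (eps / 2))) by apply exp_ineq1_le.
    lra.
Qed.

(* Convexity of [exp], from the tangent-line bound at the barycentre. *)
Lemma exp_convex th al be : 0 <= th <= 1 ->
  exp (th * al + (1 - th) * be) <= th * exp al + (1 - th) * exp be.
Proof.
  intros Hth. set (m := th * al + (1 - th) * be).
  assert (Ha : exp m * (1 + (al - m)) <= exp al).
  { replace al with (m + (al - m)) at 2 by ring. rewrite exp_plus.
    apply Rmult_le_compat_l; [left; apply exp_pos | apply exp_ineq1_le]. }
  assert (Hb : exp m * (1 + (be - m)) <= exp be).
  { replace be with (m + (be - m)) at 2 by ring. rewrite exp_plus.
    apply Rmult_le_compat_l; [left; apply exp_pos | apply exp_ineq1_le]. }
  assert (E : th * (exp m * (1 + (al - m))) + (1 - th) * (exp m * (1 + (be - m))) = exp m)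
    by (unfold m; ring).
  assert (th * (exp m * (1 + (al - m))) <= th * exp al) by (apply Rmult_le_compat_l; lra).
  assert ((1 - th) * (exp m * (1 + (be - m))) <= (1 - th) * exp be)
    by (apply Rmult_le_compat_l; lra).
  lra.
Qed.

Lemma gamma_kernel_interpolate p q th t : 0 < p -> 0 < q -> 0 <= th <= 1 -> 0 < t ->
  let C := exp (th * ln (Gamma p) + (1 - th) * ln (Gamma q)) in
  gamma_kernel (th * p + (1 - th) * q) t
  <= C * th / Gamma p * gamma_kernel p t + C * (1 - th) / Gamma q * gamma_kernel q t.
Proof.
  intros Hp Hq Hth Ht C.
  pose proof (Gamma_pos p Hp) as Gp. pose proof (Gamma_pos q Hq) as Gq.
  set (al := (p - 1) * ln t + - t - ln (Gamma p)).
  set (be := (q - 1) * ln t + - t - ln (Gamma q)).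
  assert (E1 : gamma_kernel (th * p + (1 - th) * q) t
               = C * exp (th * al + (1 - th) * be)).
  { unfold gamma_kernel, Rpower, C. rewrite <- !exp_plus. f_equal. unfold al, be. ring. }
  assert (E2 : gamma_kernel p t = Gamma p * exp al).
  { unfold gamma_kernel, Rpower, al. rewrite <- (exp_ln (Gamma p)) at 1 by lra.
    rewrite <- !exp_plus. f_equal. ring. }
  assert (E3 : gamma_kernel q t = Gamma q * exp be).
  { unfold gamma_kernel, Rpower, be. rewrite <- (exp_ln (Gamma q)) at 1 by lra.
    rewrite <- !exp_plus. f_equal. ring. }
  rewrite E1, E2, E3.
  replace (C * th / Gamma p * (Gamma p * exp al) + C * (1 - th) / Gamma q * (Gamma q * exp be))
    with (C * (th * exp al + (1 - th) * exp be)) by (field; lra).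
  apply Rmult_le_compat_l; [left; apply exp_pos | now apply exp_convex].
Qed.

Lemma Gamma_log_convex p q th : 0 < p -> 0 < q -> 0 <= th <= 1 ->
  ln (Gamma (th * p + (1 - th) * q)) <= th * ln (Gamma p) + (1 - th) * ln (Gamma q).
Proof.
  intros Hp Hq Hth.
  set (r := th * p + (1 - th) * q).
  assert (Hr : 0 < r).
  { unfold r. destruct (Rle_lt_or_eq_dec 0 th (proj1 Hth)) as [H | <-]; [| lra].
    assert (0 < th * p) by (apply Rmult_lt_0_compat; lra).
    assert (0 <= (1 - th) * q) by (apply Rmult_le_pos; lra). lra. }
  pose proof (Gamma_pos p Hp) as Gp. pose proof (Gamma_pos q Hq) as Gq.
  set (C := exp (th * ln (Gamma p) + (1 - th) * ln (Gamma q))).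
  assert (HG : Gamma r <= C).
  { apply Gamma_le_bound; [exact Hr |]. intros a b Hab.
    assert (Hex : forall s, ex_RInt (gamma_kernel s) a b)
      by (intros; apply ex_RInt_pos; try lra; apply gamma_kernel_cont).
    apply Rle_trans with (RInt (fun t => C * th / Gamma p * gamma_kernel p t
                                       + C * (1 - th) / Gamma q * gamma_kernel q t) a b).
    - apply RInt_le; try lra; auto.
      + apply (ex_RInt_plus (V := R_NormedModule) (fun t => _ * gamma_kernel p t));
          apply (ex_RInt_scal (V := R_NormedModule)); auto.
      + intros t Ht. apply gamma_kernel_interpolate; lra.
    - rewrite RInt_lin by auto.
      assert (RInt (gamma_kernel p) a b <= Gamma p) by (apply Gamma_ge_partial; lra).
      assert (RInt (gamma_kernel q) a b <= Gamma q) by (apply Gamma_ge_partial; lra).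
      assert (0 <= C * th / Gamma p) by
        (apply Rdiv_le_0_compat; [apply Rmult_le_pos; [left; apply exp_pos |] |]; lra).
      assert (0 <= C * (1 - th) / Gamma q) by
        (apply Rdiv_le_0_compat; [apply Rmult_le_pos; [left; apply exp_pos |] |]; lra).
      apply Rle_trans with (C * th / Gamma p * Gamma p + C * (1 - th) / Gamma q * Gamma q).
      + apply Rplus_le_compat; apply Rmult_le_compat_l; lra.
      + right. field. lra. }
  unfold C in HG. rewrite <- (ln_exp (th * ln (Gamma p) + (1 - th) * ln (Gamma q))).
  apply ln_le; [now apply Gamma_pos | exact HG].
Qed.

Lemma atanh_lower z : 0 < z < 1 -> 2 * z < ln (1 + z) - ln (1 - z).
Proof.
  intros Hz.
  set (g := fun t => ln (1 + t) - ln (1 - t) - 2 * t).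
  destruct (MVT_cor2 g (fun t => / (1 + t) + / (1 - t) - 2) 0 z) as [c [Hc1 Hc2]];
    try lra.
  - intros c Hc. apply is_derive_Reals. unfold g. auto_derive; [lra |]. field; lra.
  - unfold g in Hc1. rewrite Rplus_0_r, Rminus_0_r, ln_1 in Hc1.
    assert (/ (1 + c) + / (1 - c) - 2 = 2 * c * c / ((1 + c) * (1 - c))) by (field; lra).
    assert (0 < 2 * c * c / ((1 + c) * (1 - c))) by (apply Rdiv_lt_0_compat; nra).
    nra.
Qed.

Lemma atanh_upper z : 0 < z < 1 ->
  ln (1 + z) - ln (1 - z) < 2 * z + 2 * z ^ 3 / (3 * (1 - z ^ 2)).
Proof.
  intros Hz.
  set (h := fun t => 2 * t + 2 * t ^ 3 / (3 * (1 - t ^ 2)) - ln (1 + t) + ln (1 - t)).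
  destruct (MVT_cor2 h (fun t => 4 / 3 * t ^ 4 / (1 - t ^ 2) ^ 2) 0 z) as [c [Hc1 Hc2]];
    try lra.
  - intros c Hc. apply is_derive_Reals. unfold h.
    assert (1 - c ^ 2 <> 0) by nra.
    assert (c * c < 1) by nra.
    auto_derive; [repeat split; lra |]. field. repeat split; lra.
  - unfold h in Hc1.
    replace (2 * 0 + 2 * 0 ^ 3 / (3 * (1 - 0 ^ 2)) - ln (1 + 0) + ln (1 - 0)) with 0 in Hc1
      by (rewrite Rplus_0_r, Rminus_0_r, ln_1; field).
    assert (0 < 4 / 3 * c ^ 4 / (1 - c ^ 2) ^ 2).
    { apply Rdiv_lt_0_compat; [| apply pow_lt; nra].
      assert (0 < c ^ 4) by (apply pow_lt; lra). lra. }
    assert (0 < 4 / 3 * c ^ 4 / (1 - c ^ 2) ^ 2 * (z - 0)) by (apply Rmult_lt_0_compat; lra).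
    lra.
Qed.

(* The remainder in Stirling's formula,
   [stirling_rem y = ln (Gamma y) - (y - 1/2) ln y + y],
   which tends to [ln (2 PI) / 2] as [y -> +oo]. *)
Definition stirling_rem (y : R) : R := ln (Gamma y) - (y - / 2) * ln y + y.

(* Its decrement over a unit step, [stirling_rem y - stirling_rem (y + 1)]. *)
Definition stirling_step (y : R) : R := (y + / 2) * (ln (y + 1) - ln y) - 1.

Lemma ln_Gamma_succ y : 0 < y -> ln (Gamma (y + 1)) = ln y + ln (Gamma y).
Proof.
  intros Hy. rewrite Gamma_succ by exact Hy. apply ln_mult; [exact Hy | now apply Gamma_pos].
Qed.

Lemma stirling_rem_step y : 0 < y -> stirling_rem y - stirling_rem (y + 1) = stirling_step y.
Proof.
  intros Hy. unfold stirling_rem, stirling_step. rewrite ln_Gamma_succ by exact Hy.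
  replace (y + 1 - / 2) with (y + / 2) by field. field.
Qed.

(* With [z = 1 / (2y + 1)], [stirling_step y = atanh z / z - 1], so
   [0 < stirling_step y < 1/(12 y) - 1/(12 (y + 1))]. *)
Lemma stirling_step_bounds y : 0 < y ->
  0 < stirling_step y < / (12 * y) - / (12 * (y + 1)).
Proof.
  intros Hy. set (z := / (2 * y + 1)).
  assert (Hz : 0 < z < 1).
  { unfold z. split; [apply Rinv_0_lt_compat; lra |].
    rewrite <- Rinv_1. apply Rinv_lt_contravar; lra. }
  assert (E : ln (y + 1) - ln y = ln (1 + z) - ln (1 - z)).
  { rewrite <- !ln_div by lra. f_equal. unfold z. field. lra. }
  assert (Ey : y + / 2 = / (2 * z)) by (unfold z; field; lra).
  assert (Estep : 2 * z * stirling_step y = ln (1 + z) - ln (1 - z) - 2 * z).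
  { unfold stirling_step. rewrite E, Ey. field. lra. }
  assert (Ebound : 2 * z * (/ (12 * y) - / (12 * (y + 1))) = 2 * z ^ 3 / (3 * (1 - z ^ 2))).
  { assert (Ez : 1 - z ^ 2 = 4 * y * (y + 1) * z ^ 2) by (unfold z; field; lra).
    rewrite Ez. field. repeat split; lra. }
  pose proof (atanh_lower z Hz). pose proof (atanh_upper z Hz).
  split; apply Rmult_lt_reg_l with (2 * z); lra.
Qed.

Lemma stirling_rem_drop y (m : nat) : 0 < y ->
  0 <= stirling_rem y - stirling_rem (y + INR m) <= / (12 * y) - / (12 * (y + INR m)).
Proof.
  intros Hy. induction m as [| m IH].
  - simpl. rewrite Rplus_0_r. lra.
  - assert (Hm : 0 <= INR m) by apply pos_INR.
    rewrite S_INR.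
    pose proof (stirling_rem_step (y + INR m) ltac:(lra)) as Hstep.
    pose proof (stirling_step_bounds (y + INR m) ltac:(lra)) as Hb.
    replace (y + INR m + 1) with (y + (INR m + 1)) in Hstep, Hb by ring.
    lra.
Qed.

Lemma stirling_rem_drop_ge_step y (m : nat) : 0 < y -> (1 <= m)%nat ->
  stirling_step y <= stirling_rem y - stirling_rem (y + INR m).
Proof.
  intros Hy Hm. destruct m as [| m]; [lia |].
  pose proof (stirling_rem_step y Hy).
  pose proof (stirling_rem_drop (y + 1) m ltac:(lra)) as [Hdrop _].
  rewrite S_INR. replace (y + (INR m + 1)) with (y + 1 + INR m) by ring.
  lra.
Qed.

(* Log-convexity between [N] and [N + 1] bounds [ln Gamma (N + th)] above ... *)
Lemma ln_Gamma_shift_upper N th : 0 < N -> 0 <= th <= 1 ->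
  ln (Gamma (N + th)) - ln (Gamma N) <= th * ln N.
Proof.
  intros HN Hth.
  pose proof (Gamma_log_convex (N + 1) N th ltac:(lra) HN Hth) as Hconv.
  replace (th * (N + 1) + (1 - th) * N) with (N + th) in Hconv by ring.
  rewrite ln_Gamma_succ in Hconv by exact HN.
  lra.
Qed.

(* ... and log-convexity between [N + th] and [N + th + 1] bounds it below. *)
Lemma ln_Gamma_shift_lower N th : 0 < N -> 0 <= th <= 1 ->
  ln N - (1 - th) * ln (N + th) <= ln (Gamma (N + th)) - ln (Gamma N).
Proof.
  intros HN Hth.
  pose proof (Gamma_log_convex (N + th) (N + th + 1) th ltac:(lra) ltac:(lra) Hth)
    as Hconv.
  replace (th * (N + th) + (1 - th) * (N + th + 1)) with (N + 1) in Hconv by ring.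
  rewrite !ln_Gamma_succ in Hconv by lra.
  lra.
Qed.

Lemma stirling_rem_interpolate N th : 1 <= N -> 0 <= th <= 1 ->
  Rabs (stirling_rem (N + th) - stirling_rem N) <= / (2 * N).
Proof.
  intros HN Hth.
  pose proof (ln_Gamma_shift_upper N th ltac:(lra) Hth) as Hup.
  pose proof (ln_Gamma_shift_lower N th ltac:(lra) Hth) as Hlo.
  set (l := ln (N + th) - ln N).
  assert (Hl_up : l <= th / N).
  { unfold l. rewrite <- ln_div by lra.
    replace (th / N) with ((N + th) / N - 1) by (field; lra).
    apply ln_le_sub1, Rdiv_lt_0_compat; lra. }
  assert (Hl_lo : th / (N + th) <= l).
  { unfold l. pose proof (ln_le_sub1 (N / (N + th))) as H.
    rewrite ln_div in H by lra.
    replace (N / (N + th) - 1) with (- (th / (N + th))) in H by (field; lra).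
    assert (0 < N / (N + th)) by (apply Rdiv_lt_0_compat; lra). lra. }
  assert (Hlo' : th - (N + / 2) * l <= stirling_rem (N + th) - stirling_rem N)
    by (unfold stirling_rem, l in *; nra).
  assert (Hup' : stirling_rem (N + th) - stirling_rem N <= th - (N + th - / 2) * l)
    by (unfold stirling_rem, l in *; nra).
  assert (H1 : (N + / 2) * l <= th + th / (2 * N)).
  { replace (th + th / (2 * N)) with ((N + / 2) * (th / N)) by (field; lra).
    apply Rmult_le_compat_l; lra. }
  assert (H2 : th - th / (2 * (N + th)) <= (N + th - / 2) * l).
  { replace (th - th / (2 * (N + th))) with ((N + th - / 2) * (th / (N + th)))
      by (field; lra).
    apply Rmult_le_compat_l; lra. }
  assert (H3 : th / (2 * N) <= / (2 * N)).
  { unfold Rdiv. rewrite <- (Rmult_1_l (/ (2 * N))) at 2.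
    apply Rmult_le_compat_r; [left; apply Rinv_0_lt_compat |]; lra. }
  assert (H4 : th / (2 * (N + th)) <= / (2 * N)).
  { apply Rle_trans with (th / (2 * N)); [| exact H3].
    apply Rmult_le_compat_l; [lra |]. apply Rinv_le_contravar; lra. }
  apply Rabs_le. lra.
Qed.

(* Wallis integrals [W n = \int_0^(PI/2) sin^n]; comparing even and odd ones
   identifies the constant [ln (2 PI) / 2] in Stirling's formula. *)
Definition W (n : nat) : R := RInt (fun t => sin t ^ n) 0 (PI / 2).

Lemma sin_pow_cont n t : continuous (fun t => sin t ^ n) t.
Proof. apply (@ex_derive_continuous R_AbsRing R_NormedModule). auto_derive. auto. Qed.

Lemma ex_RInt_sin_pow n : ex_RInt (fun t => sin t ^ n) 0 (PI / 2).
Proof.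
  apply (ex_RInt_continuous (V := R_CompleteNormedModule)). intros; apply sin_pow_cont.
Qed.

Lemma PI2_pos : 0 < PI / 2.
Proof. pose proof PI_RGT_0. lra. Qed.

Lemma W_0 : W 0 = PI / 2.
Proof. unfold W. simpl. rewrite RInt_const. unfold scal; simpl; unfold mult; simpl. ring. Qed.

Lemma W_1 : W 1 = 1.
Proof.
  unfold W. pose proof PI2_pos.
  rewrite (RInt_by_antiderivative (fun t => - cos t)); try lra.
  - rewrite cos_PI2, cos_0. lra.
  - intros t Ht. auto_derive; auto. simpl; lra.
  - intros t Ht. apply sin_pow_cont.
Qed.

Lemma W_rec n : INR (S (S n)) * W (S (S n)) = INR (S n) * W n.
Proof.
  pose proof PI2_pos.
  assert (E : RInt (fun t => INR (S (S n)) * sin t ^ (S (S n)) + (- INR (S n)) * sin t ^ n)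
                0 (PI / 2) = 0).
  { rewrite (RInt_by_antiderivative (fun t => - cos t * sin t ^ (S n))); try lra.
    - rewrite cos_PI2, sin_0. simpl. ring.
    - intros t Ht. auto_derive; auto.
      change (match n with 0%nat => 1 | S _ => INR n + 1 end) with (INR (S n)).
      rewrite !S_INR. simpl.
      assert (E : cos t * cos t = 1 - sin t * sin t)
        by (pose proof (cos2 t); unfold Rsqr in *; lra).
      replace (- (1 * - sin t) * (sin t * sin t ^ n)
               + - cos t * (1 * cos t * ((INR n + 1) * sin t ^ n)))
        with (sin t * sin t * sin t ^ n - (cos t * cos t) * (INR n + 1) * sin t ^ n) by ring.
      rewrite E. ring.
    - intros t Ht. apply (@ex_derive_continuous R_AbsRing R_NormedModule). auto_derive. auto. }
  rewrite RInt_lin in E by apply ex_RInt_sin_pow.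
  unfold W. lra.
Qed.

Lemma W_decr n : W (S n) <= W n.
Proof.
  pose proof PI2_pos. unfold W. apply RInt_le; try lra; try apply ex_RInt_sin_pow.
  intros t Ht. simpl.
  assert (0 <= sin t) by (apply sin_ge_0; lra).
  assert (sin t <= 1) by apply SIN_bound.
  assert (0 <= sin t ^ n) by (apply pow_le; auto).
  nra.
Qed.

Lemma W_pos n : 0 < W n.
Proof.
  enough (0 < W n /\ 0 < W (S n)) by tauto.
  induction n as [| n [IH1 IH2]].
  - rewrite W_0, W_1. pose proof PI2_pos. lra.
  - split; auto. pose proof (W_rec n).
    assert (0 < INR (S (S n))) by (apply lt_0_INR; lia).
    assert (0 < INR (S n) * W n) by (apply Rmult_lt_0_compat; [apply lt_0_INR; lia | lra]).
    nra.
Qed.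

Lemma INR_double n : INR (2 * n) = 2 * INR n.
Proof. rewrite mult_INR. simpl. ring. Qed.

Lemma W_even n : W (2 * n) * 4 ^ n * Gamma (INR n + 1) ^ 2 = PI / 2 * Gamma (2 * INR n + 1).
Proof.
  induction n as [| n IH].
  - simpl. rewrite Rmult_0_r, Rplus_0_l, Gamma_one, W_0. ring.
  - set (N := INR n) in IH. assert (HN : 0 <= N) by apply pos_INR.
    rewrite S_INR. fold N.
    assert (Hrec : (2 * N + 2) * W (2 * S n) = (2 * N + 1) * W (2 * n)).
    { replace (2 * S n)%nat with (S (S (2 * n))) by lia.
      pose proof (W_rec (2 * n)) as R. rewrite !S_INR, INR_double in R. fold N in R.
      lra. }
    rewrite (Gamma_succ (N + 1)) by lra.
    replace (2 * (N + 1) + 1) with (2 * N + 1 + 1 + 1) by ring.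
    rewrite (Gamma_succ (2 * N + 1 + 1)), (Gamma_succ (2 * N + 1)) by lra.
    apply Rmult_eq_reg_l with (2 * N + 2); [| lra].
    replace ((2 * N + 2) * (W (2 * S n) * 4 ^ S n * ((N + 1) * Gamma (N + 1)) ^ 2))
      with (4 * (N + 1) ^ 2 * ((2 * N + 2) * W (2 * S n)) * 4 ^ n * Gamma (N + 1) ^ 2)
      by (simpl; ring).
    rewrite Hrec.
    replace (4 * (N + 1) ^ 2 * ((2 * N + 1) * W (2 * n)) * 4 ^ n * Gamma (N + 1) ^ 2)
      with (4 * (N + 1) ^ 2 * (2 * N + 1) * (W (2 * n) * 4 ^ n * Gamma (N + 1) ^ 2))
      by ring.
    rewrite IH. ring.
Qed.

Lemma W_odd n : W (S (2 * n)) * Gamma (2 * INR n + 2) = 4 ^ n * Gamma (INR n + 1) ^ 2.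
Proof.
  induction n as [| n IH].
  - simpl. rewrite Rmult_0_r, !Rplus_0_l, Gamma_one, W_1.
    replace 2 with (1 + 1) by ring. rewrite Gamma_succ, Gamma_one by lra. ring.
  - set (N := INR n) in IH. assert (HN : 0 <= N) by apply pos_INR.
    rewrite S_INR. fold N.
    assert (Hrec : (2 * N + 3) * W (S (2 * S n)) = (2 * N + 2) * W (S (2 * n))).
    { replace (S (2 * S n)) with (S (S (S (2 * n)))) by lia.
      pose proof (W_rec (S (2 * n))) as R. rewrite !S_INR, INR_double in R. fold N in R.
      lra. }
    rewrite (Gamma_succ (N + 1)) by lra.
    replace (2 * (N + 1) + 2) with (2 * N + 2 + 1 + 1) by ring.
    rewrite (Gamma_succ (2 * N + 2 + 1)), (Gamma_succ (2 * N + 2)) by lra.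
    replace (W (S (2 * S n)) * ((2 * N + 2 + 1) * ((2 * N + 2) * Gamma (2 * N + 2))))
      with ((2 * N + 2) * ((2 * N + 3) * W (S (2 * S n))) * Gamma (2 * N + 2)) by ring.
    rewrite Hrec.
    replace ((2 * N + 2) * ((2 * N + 2) * W (S (2 * n))) * Gamma (2 * N + 2))
      with ((2 * N + 2) * (2 * N + 2) * (W (S (2 * n)) * Gamma (2 * N + 2))) by ring.
    rewrite IH. simpl. ring.
Qed.

(* Monotonicity and the recurrence squeeze the ratio [W (2n) / W (2n + 1)]
   between [1] and [1 + 1/(2n)]. *)
Lemma W_even_odd_squeeze n : (1 <= n)%nat ->
  W (S (2 * n)) <= W (2 * n) <= (1 + / (2 * INR n)) * W (S (2 * n)).
Proof.
  intros Hn. split; [apply W_decr |].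
  destruct n as [| k]; [lia |].
  set (N := INR (S k)).
  assert (HN : 1 <= N) by (unfold N; rewrite S_INR; pose proof (pos_INR k); lra).
  replace (2 * S k)%nat with (S (S (2 * k))) by lia.
  pose proof (W_rec (S (2 * k))) as R. pose proof (W_decr (S (2 * k))) as D.
  replace (INR (S (S (S (2 * k))))) with (2 * N + 1) in R
    by (unfold N; rewrite !S_INR, INR_double; ring).
  replace (INR (S (S (2 * k)))) with (2 * N) in R
    by (unfold N; rewrite !S_INR, INR_double; ring).
  assert (E : (1 + / (2 * N)) * W (S (S (S (2 * k)))) = W (S (2 * k))).
  { apply Rmult_eq_reg_l with (2 * N); [| lra]. rewrite <- R. field. lra. }
  rewrite E. exact D.
Qed.

Lemma ln_wallis_ratio n : (1 <= n)%nat ->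
  ln (W (2 * n)) - ln (W (S (2 * n)))
  = ln (2 * PI) + ln (1 + / (2 * INR n)) - 4 * stirling_rem (INR n)
    + 2 * stirling_rem (2 * INR n).
Proof.
  intros Hn. set (N := INR n).
  assert (HN : 1 <= N) by (apply (le_INR 1); exact Hn).
  pose proof PI_RGT_0 as HPI.
  pose proof (W_pos (2 * n)) as We. pose proof (W_pos (S (2 * n))) as Wo.
  pose proof (Gamma_pos N ltac:(lra)) as G1.
  pose proof (Gamma_pos (N + 1) ltac:(lra)) as G2.
  pose proof (Gamma_pos (2 * N) ltac:(lra)) as G3.
  pose proof (Gamma_pos (2 * N + 1) ltac:(lra)) as G4.
  assert (ln_even : ln (W (2 * n)) + N * ln 4 + 2 * ln (Gamma (N + 1))
                    = ln (PI / 2) + ln (Gamma (2 * N + 1))).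
  { pose proof (W_even n) as E. fold N in E.
    rewrite <- ln_mult by lra. rewrite <- E.
    rewrite !ln_mult, !ln_pow by (try apply Rmult_lt_0_compat; try apply pow_lt; lra).
    unfold N; simpl INR; ring. }
  assert (ln_odd : ln (W (S (2 * n))) + ln (Gamma (2 * N + 2))
                   = N * ln 4 + 2 * ln (Gamma (N + 1))).
  { pose proof (W_odd n) as E. fold N in E.
    rewrite <- ln_mult by (try apply Gamma_pos; lra). rewrite E.
    rewrite ln_mult, !ln_pow by (try apply pow_lt; lra). unfold N; simpl INR; ring. }
  rewrite (ln_Gamma_succ N) in ln_even, ln_odd by lra.
  replace (2 * N + 2) with (2 * N + 1 + 1) in ln_odd by ring.
  rewrite (ln_Gamma_succ (2 * N + 1)) in ln_odd by lra.
  rewrite (ln_Gamma_succ (2 * N)) in ln_even, ln_odd by lra.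
  assert (E4 : ln 4 = 2 * ln 2)
    by (replace 4 with (2 * 2) by ring; rewrite ln_mult; lra).
  assert (E2N : ln (2 * N) = ln 2 + ln N) by (apply ln_mult; lra).
  assert (E2N1 : ln (2 * N + 1) = ln (2 * N) + ln (1 + / (2 * N))).
  { rewrite <- ln_mult by (try apply Rplus_lt_0_compat, Rinv_0_lt_compat; lra).
    f_equal. field. lra. }
  assert (EPI2 : ln (PI / 2) = ln PI - ln 2) by (apply ln_div; lra).
  assert (E2PI : ln (2 * PI) = ln 2 + ln PI) by (apply ln_mult; lra).
  unfold stirling_rem. rewrite E2N1, E2N, E4, EPI2 in *. rewrite E2PI.
  lra.
Qed.

(* Stirling's formula at the integers, with an explicit error:
   [|L n - ln (2 PI) / 2| <= 1/(4 n)], because the Wallis ratio lies in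
   [[1, 1 + 1/(2n)]] and [0 <= L n - L (2n) <= 1/(24 n)]. *)
Lemma stirling_rem_at_integer n : (1 <= n)%nat ->
  Rabs (stirling_rem (INR n) - ln (2 * PI) / 2) <= / (4 * INR n).
Proof.
  intros Hn. pose proof (ln_wallis_ratio n Hn) as Hratio. set (N := INR n) in *.
  assert (HN : 1 <= N) by (apply (le_INR 1); exact Hn).
  assert (Hinv : 0 < / (2 * N)) by (apply Rinv_0_lt_compat; lra).
  assert (Hsq : 0 <= ln (W (2 * n)) - ln (W (S (2 * n))) <= ln (1 + / (2 * N))).
  { destruct (W_even_odd_squeeze n Hn) as [S1 S2]. fold N in S2.
    pose proof (W_pos (S (2 * n))) as Wo.
    assert (ln (W (S (2 * n))) <= ln (W (2 * n))) by (apply ln_le; lra).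
    assert (ln (W (2 * n)) <= ln ((1 + / (2 * N)) * W (S (2 * n)))) by
      (apply ln_le; [apply W_pos | exact S2]).
    rewrite ln_mult in * by lra. lra. }
  assert (Hlog : ln (1 + / (2 * N)) <= / (2 * N))
    by (pose proof (ln_le_sub1 (1 + / (2 * N))); lra).
  pose proof (stirling_rem_drop N n ltac:(lra)) as Hdrop. fold N in Hdrop.
  replace (N + N) with (2 * N) in Hdrop by ring.
  assert (Einv : / (12 * N) - / (12 * (2 * N)) = / (24 * N)) by (field; lra).
  assert (Hq : / (24 * N) <= / (4 * N)) by (apply Rinv_le_contravar; lra).
  assert (Eh : / (2 * N) = 2 * / (4 * N)) by (field; lra).
  apply Rabs_le. lra.
Qed.

Lemma floor_nat (y : R) : 1 < y -> exists k : nat, (1 <= k)%nat /\ INR k <= y < INR k + 1.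
Proof.
  intros Hy. destruct (base_Int_part y) as [H1 H2].
  set (z := Int_part y) in *.
  assert (Hz : (0 < z)%Z) by (apply lt_IZR; lra).
  exists (Z.to_nat z).
  assert (E : INR (Z.to_nat z) = IZR z) by (rewrite INR_IZR_INZ, Z2Nat.id; [reflexivity | lia]).
  rewrite E. split; [lia | lra].
Qed.

Lemma stirling_rem_asymptotic y : 1 <= y ->
  Rabs (stirling_rem y - ln (2 * PI) / 2) <= 2 / y.
Proof.
  intros Hy.
  assert (Hk : exists k : nat, (1 <= k)%nat /\ INR k <= y < INR k + 1).
  { destruct (Req_dec y 1) as [-> | Hy1].
    - exists 1%nat. simpl. split; [lia | lra].
    - apply floor_nat. lra. }
  destruct Hk as [k [Hk1 [Hky Hyk]]].
  set (N := INR k) in *.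
  assert (HN : 1 <= N) by (apply (le_INR 1); exact Hk1).
  pose proof (stirling_rem_interpolate N (y - N) HN ltac:(lra)) as Hint.
  replace (N + (y - N)) with y in Hint by ring.
  pose proof (stirling_rem_at_integer k Hk1) as Hnat. fold N in Hnat.
  assert (E : / (2 * N) + / (4 * N) = 3 / (4 * N)) by (field; lra).
  assert (Hcmp : 3 / (4 * N) <= 2 / y).
  { apply Rmult_le_reg_r with (4 * N * y); [nra |].
    replace (3 / (4 * N) * (4 * N * y)) with (3 * y) by (field; lra).
    replace (2 / y * (4 * N * y)) with (8 * N) by (field; lra). lra. }
  pose proof (Rabs_triang (stirling_rem y - stirling_rem N)
                          (stirling_rem N - ln (2 * PI) / 2)) as Htri.
  replace (stirling_rem y - stirling_rem N + (stirling_rem N - ln (2 * PI) / 2))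
    with (stirling_rem y - ln (2 * PI) / 2) in Htri by ring.
  lra.
Qed.

Lemma ln2_lt_4_5 : ln 2 < 4 / 5.
Proof.
  assert (H : 2 < exp (4 / 5)).
  { replace (4 / 5) with (1 / 5 + 1 / 5 + 1 / 5 + 1 / 5) by field. rewrite !exp_plus.
    pose proof (exp_ineq1_le (1 / 5)) as H0. set (a := exp (1 / 5)) in *.
    assert (H1 : 36 / 25 <= a * a) by nra.
    assert (H2 : 36 / 25 * (36 / 25) <= a * a * (a * a)) by (apply Rmult_le_compat; lra).
    lra. }
  rewrite <- (ln_exp (4 / 5)). apply ln_increasing; lra.
Qed.

(* The remainder strictly decreases from [nu] to [nu + m] (by at least
   [stirling_step nu > 0], at most [1/(12 nu)]), and for large [m] the value at
   [nu + m] is as close to [ln (2 PI) / 2] as needed. *)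
Lemma stirling_rem_bounds nu : 1 < nu ->
  ln (2 * PI) / 2 < stirling_rem nu < ln PI / 2 + / 2.
Proof.
  intros Hnu.
  pose proof (stirling_step_bounds nu ltac:(lra)) as [Hstep _].
  set (eps := Rmin (stirling_step nu) (1 / 60)).
  assert (Heps : 0 < eps) by (unfold eps, Rmin; destruct Rle_dec; lra).
  assert (Heps1 : eps <= stirling_step nu) by apply Rmin_l.
  assert (Heps2 : eps <= 1 / 60) by apply Rmin_r.
  destruct (archimed_cor1 (eps / 2) ltac:(lra)) as [m [Hm1 Hm2]].
  assert (HmR : 0 < INR m) by (apply lt_0_INR; exact Hm2).
  set (y := nu + INR m).
  assert (Hfar : 2 / y < eps).
  { apply Rle_lt_trans with (2 / INR m); [| unfold Rdiv; lra].
    apply Rmult_le_compat_l; [lra |]. apply Rinv_le_contravar; unfold y; lra. }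
  pose proof (stirling_rem_asymptotic y ltac:(unfold y; lra)) as Hy.
  apply Rabs_le_between in Hy.
  pose proof (stirling_rem_drop_ge_step nu m ltac:(lra) ltac:(lia)) as Hdrop1.
  pose proof (stirling_rem_drop nu m ltac:(lra)) as [_ Hdrop2]. fold y in Hdrop1, Hdrop2.
  assert (/ (12 * nu) < / 12) by (apply Rinv_lt_contravar; lra).
  assert (0 < / (12 * y)) by (apply Rinv_0_lt_compat; unfold y; lra).
  assert (E2PI : ln (2 * PI) = ln 2 + ln PI) by (apply ln_mult; pose proof PI_RGT_0; lra).
  pose proof ln2_lt_4_5.
  split; lra.
Qed.

Lemma c0_stirling nu : 1 < nu ->
  c0 nu = 2 * nu / exp 1 * exp (2 / (2 * nu - 1) * (stirling_rem nu - ln PI / 2 - / 2)).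
Proof.
  intros Hnu.
  pose proof (Gamma_pos nu ltac:(lra)) as HG. pose proof PI_RGT_0 as HPI.
  assert (Hsqrt : ln (sqrt PI) = ln PI / 2).
  { rewrite <- Rpower_sqrt by lra. unfold Rpower. rewrite ln_exp. field. }
  assert (Ee : 2 * nu / exp 1 = 2 * exp (ln nu - 1)).
  { unfold Rminus. rewrite exp_plus, exp_ln, exp_Ropp by lra. field.
    apply Rgt_not_eq, exp_pos. }
  unfold c0, Rpower. rewrite ln_div, Hsqrt by (try apply sqrt_lt_R0; lra).
  rewrite Ee, Rmult_assoc, <- exp_plus. do 2 f_equal.
  unfold stirling_rem. field. lra.
Qed.

Theorem mainTheorem8 (nu : R) (Hnu : 1 < nu) :
  2 * nu / exp 1 * Rpower (2 / exp 1) (1 / (2 * nu - 1)) < c0 nu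
  /\ c0 nu < 2 * nu / exp 1.
Proof.
  pose proof (stirling_rem_bounds nu Hnu) as [Hlo Hhi].
  pose proof PI_RGT_0 as HPI.
  set (k := 2 / (2 * nu - 1)).
  assert (Hk : 0 < k) by (apply Rdiv_lt_0_compat; lra).
  assert (Hpref : 0 < 2 * nu / exp 1) by (apply Rdiv_lt_0_compat; [lra | apply exp_pos]).
  assert (Elower : Rpower (2 / exp 1) (1 / (2 * nu - 1))
                   = exp (k * (ln (2 * PI) / 2 - ln PI / 2 - / 2))).
  { unfold Rpower, k. rewrite ln_div, ln_exp, ln_mult by (try apply exp_pos; lra).
    f_equal. field. lra. }
  rewrite c0_stirling by exact Hnu. fold k. rewrite Elower. split.
  - apply Rmult_lt_compat_l; [exact Hpref |].
    apply exp_increasing, Rmult_lt_compat_l; lra.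
  - rewrite <- (Rmult_1_r (2 * nu / exp 1)) at 2.
    apply Rmult_lt_compat_l; [exact Hpref |]. rewrite <- exp_0. apply exp_increasing.
    assert (k * (stirling_rem nu - ln PI / 2 - / 2) < k * 0)
      by (apply Rmult_lt_compat_l; lra).
    lra.
Qed.
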